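(* Let $G$ be a full 1-plane graph satisfying the kite-edge standing assumption, let $S$ be a minimal separating set of $G$, and let $v\in S$. Let $(v,t_1)$ and $(v,t_2)$ be edges of $G$ with $t_1$ and $t_2$ in different flaps of $G-S$. Then there is a transition face $F$ of $G^\times$ incident to $v$ whose corresponding cell lies clockwise between $(v,t_1)$ and $(v,t_2)$ in $\rho_G(v)$.
   Context: A 1-plane graph is a graph $G$ with a good drawing in the plane (edges are simple curves; two edges intersect only at a common endpoint or a proper crossing; any two edges intersect at most once; no three edges cross at one point) in which every edge is crossed at most once. For a crossing of edges $(u,v)$ and $(w,x)$, its endpoints are $u,v,w,x$; two endpoints are consecutive if they are not $\{u,v\}$ and not $\{w,x\}$. $G$ is full 1-plane if for every crossing every two consecutive endpoints are adjacent. The planarization $G^\times$ replaces each crossing point by a new dummy vertex adjacent to the four endpoints. An edge joining consecutive endpoints $u,x$ of a crossing with dummy vertex $c$ is a kite edge if it is uncrossed and $G^\times$ has a face bounded exactly by it and $(u,c),(c,x)$. Standing assumption: for every crossing and every pair of adjacent consecutive endpoints, some edge joining them is a kite edge of that crossing. A separating set $S\subseteq V(G)$ is one with $G-S$ disconnected; the flaps are the connected components of $G-S$. A face $F$ of $G^\times$ is a transition face if $F$ is incident to an edge of $G^\times$ with both endpoints in $S$, or $F$ is incident to vertices from two different flaps. A cell is a connected region of the plane minus the drawing of $G$; each face of $G^\times$ corresponds to the cell occupying the same region. The rotation $\rho_G(v)$ is the clockwise cyclic order of the edges of $G$ incident to $v$ and the cells incident to $v$ around $v$ (obtained from the rotation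 at $v$ in $G^\times$ by replacing each edge by the corresponding edge of $G$ and each face by its cell). An element $y$ lies clockwise between $x$ and $z$ if $\rho_G(v)$ contains $x,y,z$ in this cyclic order. *)

(* Combinatorial model of a 1-plane graph via a planar
   rotation system (combinatorial map) of its planarization G^x. *)
From HB Require Import structures.
From mathcomp Require Import all_boot.

(* A map of the planarization G^x:
   - pV : all vertices of G^x (real vertices of G and dummy crossing vertices);
   - pD : darts (directed half-edges) of G^x;
   - preal : which vertices are real (vertices of G); the others are dummies;
   - ptail d : the vertex at which dart d starts;
   - prev d : the reverse dart (other half of the same edge of G^x);
   - pnxt d : the next dart clockwise around ptail d (the rotation). *)
Record pmap1 := PMap1 {
  pV : finType;
  pD : finType;
  preal : pred pV;
  ptail : pD -> pV;
  prev : pD -> pD;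
  pnxt : pD -> pD
}.

Set Implicit Arguments.
Unset Strict Implicit.
Unset Printing Implicit Defensive.

Section Defs.
Variable M : pmap1.
Local Notation V := (pV M).
Local Notation D := (pD M).
Local Notation real := (preal M).
Local Notation tail := (ptail M).
Local Notation rev := (prev M).
Local Notation nxt := (pnxt M).

Definition phead (d : D) : V := tail (rev d).
Definition dummy (c : V) : bool := ~~ real c.

(* Corners: the corner "d" is the angle at tail d lying clockwise after d
   (between d and nxt d).  Faces of G^x are the orbits of the corner
   permutation fface. *)
Definition fface (d : D) : D := rev (nxt d).

Definition rotation_system : Prop :=
  [/\ involutive rev, forall d, rev d != d, injective nxt,
      forall d, tail (nxt d) = tail d &
      forall d e, tail d = tail e -> fconnect nxt d e].

Definition map_conn : rel D :=
  fun d e => [|| e == nxt d, d == nxt e | e == rev d].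

(* Planarity (genus 0): Euler's formula  V - E + F = 2 * #components,
   written without subtraction, with #E = #D / 2. *)
Definition planar_map : Prop :=
  (2 * #|[set tail d | d : D]| + 2 * fcard fface (@predT D)
   = #|D| + 4 * n_comp map_conn (@predT D))%N.

(* Crossings: each dummy vertex has degree 4, all its neighbours are real
   (each edge is crossed at most once), the two edges through it are the
   opposite dart pairs (proper crossing), and the four endpoints are
   pairwise distinct (adjacent edges do not cross, no self-loops). *)
Definition crossings_ok : Prop :=
  forall c, dummy c ->
    [/\ #|[set d | tail d == c]| = 4,
        forall d, tail d = c -> real (phead d) &
        forall d, tail d = c ->
          uniq [:: phead d; phead (nxt d); phead (nxt (nxt d));
                   phead (nxt (nxt (nxt d)))]].

(* Edges of G.  A G-dart is a dart d with real tail; if its head is a dummy c,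
   the G-edge continues through the opposite dart at c. *)
Definition through (d : D) : D := nxt (nxt (rev d)).
Definition ghead (d : D) : V :=
  if real (phead d) then phead d else phead (through d).
Definition gadj (u w : V) : bool :=
  [exists d : D, [&& real (tail d), tail d == u & ghead d == w]].

(* Good drawing conditions not yet covered: edges of G are simple curves
   (no loops), and two edges intersect at most once (so no two edges share
   both endpoints). *)
Definition good_simple : Prop :=
  (forall d, real (tail d) -> ghead d != tail d) /\
  (forall d e, real (tail d) -> real (tail e) -> tail d = tail e ->
     ghead d = ghead e -> d = e).

Definition one_plane : Prop :=
  [/\ rotation_system, planar_map, crossings_ok & good_simple].

Definition full : Prop :=
  forall a, dummy (tail a) -> gadj (phead a) (phead (nxt a)).

Definition same_edge (d e : D) : bool := (d == e) || (d == rev e).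

Definition face_edge (d0 e : D) : bool :=
  [exists d, fconnect fface d0 d && same_edge e d].

Definition kite_edge (a g : D) : Prop :=
  [/\ real (tail g), real (phead g),
      ((tail g == phead a) && (phead g == phead (nxt a))) ||
      ((tail g == phead (nxt a)) && (phead g == phead a)) &
      exists d0 : D, forall e : D,
        face_edge d0 e = [|| same_edge e g, same_edge e a | same_edge e (nxt a)]].

Definition kite_assumption : Prop :=
  forall a, dummy (tail a) -> gadj (phead a) (phead (nxt a)) ->
    exists g, kite_edge a g.

Definition inGS (S : {set V}) (w : V) : bool := real w && (w \notin S).
Definition gs_rel (S : {set V}) : rel V :=
  fun u w => [&& inGS S u, inGS S w & gadj u w].
Definition same_flap (S : {set V}) (u w : V) : bool := connect (gs_rel S) u w.

Definition separating (S : {set V}) : Prop :=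
  {subset S <= real} /\
  exists u w, [/\ inGS S u, inGS S w & ~~ same_flap S u w].

Definition minimal_separating (S : {set V}) : Prop :=
  separating S /\ forall S' : {set V}, S' \proper S -> ~ separating S'.

Definition transition_face (S : {set V}) (d0 : D) : Prop :=
  (exists d, [/\ fconnect fface d0 d, tail d \in S & phead d \in S]) \/
  (exists d1 d2, [/\ fconnect fface d0 d1, fconnect fface d0 d2,
       inGS S (tail d1), inGS S (tail d2) & ~~ same_flap S (tail d1) (tail d2)]).

Definition cw_between (d1 c d2 : D) : Prop :=
  exists k, c = iter k nxt d1 /\ forall j, (0 < j <= k)%N -> iter j nxt d1 != d2.

End Defs.

(* Walk clockwise around v from (v,t1) to (v,t2), one corner at a time.  If
   the face of some corner crossed on the way contains an edge with both ends
   in S, or vertices of two flaps, we are done.  Otherwise, at each corner the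
   two vertices of G - S bounding it (the neighbour along each side edge, or,
   if that edge is crossed, the endpoint of the crossing next to the corner)
   lie on one face, hence in one flap; they are in G - S because a crossing
   whose two consecutive endpoints lie in S has a kite face in that corner,
   and the kite edge makes it a transition face.  Across each crossed edge the
   two endpoints flanking it are joined by the crossing edge, and fullness
   joins t1 and t2 to the endpoints next to them, so t1 and t2 would lie in
   one flap. *)
From Pilot Require Import Defs.
From mathcomp Require Import all_boot.
From Stdlib Require Import Classical.
Set Implicit Arguments. Unset Strict Implicit. Unset Printing Implicit Defensive.

Lemma iter_lt_findex (T : finType) (f : T -> T) (x y : T) (j : nat) :
  fconnect f x y -> j < findex f x y -> iter j f x != y.
Proof.
move=> xy ltj; apply/eqP => Ej.
have lt_jo : j < order f x := ltn_trans ltj (findex_max xy).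
by move: ltj; rewrite -Ej findex_iter ?ltnn.
Qed.

Section PlanarMap.
Variable M : pmap1.
Local Notation V := (pV M).
Local Notation D := (pD M).
Local Notation real := (preal M).
Local Notation tail := (ptail M).
Local Notation rev := (Defs.prev M).
Local Notation nxt := (pnxt M).
Local Notation fface := (@Defs.fface M).

Definition on_face (e : D) (w : V) : Prop := exists2 q, fconnect fface e q & tail q = w.

(* The vertex of G next to the corner d (clockwise after d) along the edge of
   d: its head, or, if d runs into a crossing, the endpoint of that crossing
   on the side of the corner.  [ccw_end] is the same on the other side of d. *)
Definition cw_end (d : D) : V :=
  if real (phead d) then phead d else phead (iter 3 nxt (rev d)).
Definition ccw_end (d : D) : V :=
  if real (phead d) then phead d else phead (nxt (rev d)).

Lemma tail_rev (d : D) : tail (rev d) = phead d.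
Proof. by []. Qed.

Lemma same_edge_cases (e f : D) : same_edge e f -> e = f \/ e = rev f.
Proof. by case/orP => /eqP; [left|right]. Qed.

Lemma same_edge_dummy_tail (e f : D) :
  dummy (tail e) -> same_edge e f -> real (phead f) -> e = f.
Proof. by move=> He /same_edge_cases [// | Ef] Hf; move: He; rewrite Ef /dummy Hf. Qed.

Lemma transition_face_fconnect (S : {set V}) (e e' : D) :
  fconnect fface e e' -> transition_face S e' -> transition_face S e.
Proof.
move=> ee' [[d [e'd dS hS]] | [q1 [q2 [e'q1 e'q2 G1 G2 NF]]]].
  by left; exists d; split=> //; apply: connect_trans e'd.
by right; exists q1, q2; split=> //; apply: connect_trans ee' _.
Qed.

Lemma face_vertices_same_flap (S : {set V}) (e : D) (u w : V) :
  ~ transition_face S e -> on_face e u -> on_face e w ->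
  inGS S u -> inGS S w -> same_flap S u w.
Proof.
move=> NT [q1 eq1 <-] [q2 eq2 <-] G1 G2; apply/negPn/negP => NF.
by apply: NT; right; exists q1, q2.
Qed.

Lemma same_flap_gadj (S : {set V}) (u w : V) :
  inGS S u -> inGS S w -> gadj u w -> same_flap S u w.
Proof. by move=> Gu Gw uw; apply: connect1; apply/and3P. Qed.

Hypothesis rotM : rotation_system M.

Lemma revK : involutive rev. Proof. by case: rotM. Qed.
Lemma nxt_inj : injective nxt. Proof. by case: rotM. Qed.
Lemma tail_nxt (d : D) : tail (nxt d) = tail d. Proof. by case: rotM. Qed.

Lemma tail_iter_nxt (n : nat) (d : D) : tail (iter n nxt d) = tail d.
Proof. by elim: n => //= n IH; rewrite tail_nxt. Qed.

Lemma tail_fconnect_nxt (d e : D) : fconnect nxt d e -> tail d = tail e.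
Proof. by apply: fconnect_invariant => x; rewrite /= tail_nxt eqxx. Qed.

Lemma phead_rev (d : D) : phead (rev d) = tail d.
Proof. by rewrite /phead revK. Qed.

Lemma phead_fface (d : D) : phead (fface d) = tail d.
Proof. by rewrite /fface phead_rev tail_nxt. Qed.

Lemma fface_inj : injective fface.
Proof. by move=> x y /(can_inj revK) /nxt_inj. Qed.

Lemma same_edge_ends (e f : D) : same_edge e f ->
  (tail e = tail f /\ phead e = phead f) \/ (tail e = phead f /\ phead e = tail f).
Proof. by case/same_edge_cases => ->; [left | right; rewrite phead_rev]. Qed.

Lemma on_face_tail (e x : D) : fconnect fface e x -> on_face e (tail x).
Proof. by exists x. Qed.

Lemma on_face_phead (e x : D) : fconnect fface e x -> on_face e (phead x).
Proof.
move=> ex; exists (finv fface x); first exact: connect_trans ex (fconnect_finv _ _).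
have /(can_inj revK) Ex : rev (nxt (finv fface x)) = rev (rev x).
  by rewrite revK; apply: (f_finv fface_inj).
by rewrite -tail_rev -Ex tail_nxt.
Qed.

Lemma ccw_end_nxt_on_face (e : D) : on_face e (ccw_end (nxt e)).
Proof.
rewrite /ccw_end; case: ifP => _; first exact/on_face_tail/fconnect1.
by apply/on_face_tail; apply: connect_trans (fconnect1 _ _) (fconnect1 _ _).
Qed.

Hypothesis crossM : crossings_ok M.

Lemma phead_real (d : D) : dummy (tail d) -> real (phead d).
Proof. by move=> Hd; have [_ Hr _] := crossM Hd; apply: Hr. Qed.

Lemma iter4_nxt (a : D) : dummy (tail a) -> iter 4 nxt a = a.
Proof.
move=> Ha; have [Hdeg4 _ _] := crossM Ha.
suff <- : order nxt a = 4 by rewrite iter_order //; apply: nxt_inj.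
rewrite -Hdeg4; apply: eq_card => d; rewrite inE; apply/idP/eqP.
  by move/tail_fconnect_nxt.
by case: rotM => _ _ _ _ Hcycle /esym /Hcycle.
Qed.

Lemma nxt_neq (a : D) : dummy (tail a) -> nxt a != a.
Proof.
move=> Ha; have [_ _ /(_ a erefl)] := crossM Ha.
by rewrite /= !inE negb_or => /andP[/andP[Hne _] _]; apply: contraNneq Hne => ->.
Qed.

Lemma nxt2_neq (a : D) : dummy (tail a) -> nxt (nxt a) != a.
Proof.
move=> Ha; have [_ _ /(_ a erefl)] := crossM Ha.
by rewrite /= !inE !negb_or => /andP[/and3P[_ Hne _] _]; apply: contraNneq Hne => ->.
Qed.

Lemma fface_iter3_rev (e : D) : dummy (phead e) -> fface (iter 3 nxt (rev e)) = e.
Proof. by move=> He; rewrite /fface -iterS iter4_nxt ?revK. Qed.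

Lemma cw_end_real (d : D) : real (cw_end d).
Proof. by rewrite /cw_end; case: ifP => // /negbT Hd; rewrite phead_real ?tail_iter_nxt. Qed.

Lemma ccw_end_real (d : D) : real (ccw_end d).
Proof. by rewrite /ccw_end; case: ifP => // /negbT Hd; rewrite phead_real ?tail_nxt. Qed.

Lemma fconnect_iter3_rev (e : D) : dummy (phead e) -> fconnect fface e (iter 3 nxt (rev e)).
Proof.
move=> He; rewrite (fconnect_sym fface_inj).
by rewrite -[X in fconnect _ _ X](fface_iter3_rev He) fconnect1.
Qed.

Lemma cw_end_on_face (e : D) : on_face e (cw_end e).
Proof.
rewrite /cw_end; case: ifP => [_ | /negbT He]; first exact/on_face_phead/connect0.
exact/on_face_phead/fconnect_iter3_rev.
Qed.

(* The witness is the G-edge running into the crossing along rev a. *)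
Lemma gadj_opposite_ends (a : D) : dummy (tail a) -> gadj (phead a) (phead (nxt (nxt a))).
Proof.
move=> Ha; apply/existsP; exists (rev a).
by rewrite tail_rev phead_real //= /ghead phead_rev (negbTE Ha) /through revK !eqxx.
Qed.

Lemma kite_face_corner (a g d0 : D) :
  dummy (tail a) -> real (tail g) -> real (phead g) ->
  (forall e, face_edge d0 e = [|| same_edge e g, same_edge e a | same_edge e (nxt a)]) ->
  fconnect fface d0 a.
Proof.
move=> Ha Hgt Hgh Hface; set P := fconnect fface d0.
have P_edge e : P e -> [|| same_edge e g, same_edge e a | same_edge e (nxt a)].
  by move=> Pe; rewrite -Hface; apply/existsP; exists e; rewrite /same_edge eqxx andbT.
have /existsP[d /andP[Pd /same_edge_cases[-> // | Ead]]] : face_edge d0 a.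
  by rewrite Hface /same_edge eqxx orbT.
(* Otherwise the face runs along rev a, so it also contains the corner
   before a at the crossing, whose dart is none of g, a, nxt a. *)
set x := iter 3 nxt a.
have Hx : dummy (tail x) by rewrite tail_iter_nxt.
have x_nxt : nxt x = a by rewrite -iterS iter4_nxt.
have Px : P x.
  apply: connect_trans Pd _; rewrite (fconnect_sym fface_inj).
  by rewrite -[d]revK -Ead -x_nxt; apply: fconnect1.
have Ha' : dummy (tail (nxt a)) by rewrite tail_nxt.
case/or3P: (P_edge x Px) => /(same_edge_dummy_tail Hx) Ex.
- by move: Hx; rewrite (Ex Hgh) /dummy Hgt.
- by move: (nxt_neq Ha); rewrite -[X in nxt X](Ex (phead_real Ha)) x_nxt eqxx.
- by move: (nxt2_neq Ha); rewrite -(Ex (phead_real Ha')) x_nxt eqxx.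
Qed.

Section Flaps.
Variable S : {set V}.
Hypotheses (fullM : full M) (kiteM : kite_assumption M).

Lemma crossing_corner_transition (a : D) :
  dummy (tail a) -> phead a \in S -> phead (nxt a) \in S -> transition_face S a.
Proof.
move=> Ha aS naS.
have [g [Hgt Hgh Hends [d0 Hface]]] := kiteM Ha (fullM Ha).
have d0a := kite_face_corner Ha Hgt Hgh Hface.
apply: (transition_face_fconnect (e' := d0)); first by rewrite fconnect_sym //; apply: fface_inj.
have [gS hgS] : tail g \in S /\ phead g \in S.
  by case/orP: Hends => /andP[/eqP-> /eqP->].
have /existsP[d /andP[d0d /same_edge_ends Hgd]] : face_edge d0 g.
  by rewrite Hface /same_edge eqxx.
left; exists d; split=> //.
  by case: Hgd => [[<- _] | [_ <-]].
by case: Hgd => [[_ <-] | [<- _]].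
Qed.

Lemma cw_end_in_S_transition (e : D) :
  tail e \in S -> cw_end e \in S -> transition_face S e.
Proof.
rewrite /cw_end; case: ifP => [_ | /negbT He] eS HS.
  by left; exists e; split=> //; apply: connect0.
apply: transition_face_fconnect (fconnect_iter3_rev He) _.
apply: crossing_corner_transition => //; first by rewrite tail_iter_nxt.
by rewrite -iterS iter4_nxt // phead_rev.
Qed.

Lemma ccw_end_nxt_in_S_transition (e : D) :
  tail e \in S -> ccw_end (nxt e) \in S -> transition_face S e.
Proof.
rewrite /ccw_end; case: ifP => [_ | /negbT He] eS HS.
  by left; exists (fface e); rewrite phead_fface; split=> //; apply: fconnect1.
apply: transition_face_fconnect (fconnect1 _ e) _.
by apply: crossing_corner_transition; rewrite ?phead_fface.
Qed.

Section Corner.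
Variable e : D.
Hypotheses (eS : tail e \in S) (e_ok : ~ transition_face S e).

Lemma cw_end_inGS : inGS S (cw_end e).
Proof. by rewrite /inGS cw_end_real; apply/negP => /(cw_end_in_S_transition eS). Qed.

Lemma ccw_end_nxt_inGS : inGS S (ccw_end (nxt e)).
Proof. by rewrite /inGS ccw_end_real; apply/negP => /(ccw_end_nxt_in_S_transition eS). Qed.

Lemma corner_ends_same_flap : same_flap S (cw_end e) (ccw_end (nxt e)).
Proof.
apply: face_vertices_same_flap e_ok (cw_end_on_face e) (ccw_end_nxt_on_face e) _ _.
  exact: cw_end_inGS.
exact: ccw_end_nxt_inGS.
Qed.

End Corner.

Lemma same_flap_ccw_cw_end (d : D) :
  inGS S (ccw_end d) -> inGS S (cw_end d) -> same_flap S (ccw_end d) (cw_end d).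
Proof.
rewrite /ccw_end /cw_end; case: ifP => [_ _ _ | /negbT Hd G1 G2]; first exact: connect0.
by apply: same_flap_gadj G1 G2 _; apply: gadj_opposite_ends; rewrite tail_nxt.
Qed.

Lemma same_flap_ghead_cw_end (d : D) :
  inGS S (ghead d) -> inGS S (cw_end d) -> same_flap S (ghead d) (cw_end d).
Proof.
rewrite /ghead /cw_end /through; case: ifP => [_ _ _ | /negbT Hd G1 G2]; first exact: connect0.
by apply: same_flap_gadj G1 G2 _; apply: fullM; rewrite /dummy !tail_nxt.
Qed.

Lemma same_flap_ccw_end_ghead (d : D) :
  inGS S (ccw_end d) -> inGS S (ghead d) -> same_flap S (ccw_end d) (ghead d).
Proof.
rewrite /ghead /ccw_end /through; case: ifP => [_ _ _ | /negbT Hd G1 G2]; first exact: connect0.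
by apply: same_flap_gadj G1 G2 _; apply: fullM; rewrite /dummy tail_nxt.
Qed.

Lemma same_flap_cw_end_nxt (e : D) :
  tail e \in S -> ~ transition_face S e -> ~ transition_face S (nxt e) ->
  same_flap S (cw_end e) (cw_end (nxt e)).
Proof.
move=> eS e_ok ne_ok; have neS : tail (nxt e) \in S by rewrite tail_nxt.
apply: connect_trans (corner_ends_same_flap eS e_ok) _.
exact: same_flap_ccw_cw_end (ccw_end_nxt_inGS eS e_ok) (cw_end_inGS neS ne_ok).
Qed.

Lemma same_flap_around_vertex (d : D) (n : nat) :
  tail d \in S -> 0 < n -> (forall k, k < n -> ~ transition_face S (iter k nxt d)) ->
  inGS S (ghead d) -> inGS S (ghead (iter n nxt d)) ->
  same_flap S (ghead d) (ghead (iter n nxt d)).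
Proof.
move=> dS n_gt0 corners_ok G1 G2.
have kS k : tail (iter k nxt d) \in S by rewrite tail_iter_nxt.
have cw_flap k : k < n -> same_flap S (cw_end d) (cw_end (iter k nxt d)).
  elim: k => [|k IH] ltkn; first exact: connect0.
  apply: connect_trans (IH (ltnW ltkn)) (same_flap_cw_end_nxt (kS k) _ _).
    exact: corners_ok (ltnW ltkn).
  exact: corners_ok ltkn.
have ltn1n : n.-1 < n by rewrite prednK.
apply: connect_trans (same_flap_ghead_cw_end G1 (cw_end_inGS dS (corners_ok 0 n_gt0))) _.
apply: connect_trans (cw_flap _ ltn1n) _.
have last_ok := corners_ok _ ltn1n.
apply: connect_trans (corner_ends_same_flap (kS _) last_ok) _.
move: G2 (ccw_end_nxt_inGS (kS _) last_ok); rewrite -iterS prednK // => G2 G2'.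
exact: same_flap_ccw_end_ghead.
Qed.

End Flaps.
End PlanarMap.

Theorem claim2 (M : pmap1) (S : {set pV M}) (v : pV M) (d1 d2 : pD M) :
  one_plane M -> full M -> kite_assumption M ->
  minimal_separating S -> v \in S ->
  ptail M d1 = v -> ptail M d2 = v ->
  inGS S (ghead d1) -> inGS S (ghead d2) -> ~~ same_flap S (ghead d1) (ghead d2) ->
  exists c : pD M,
    [/\ ptail M c = v, transition_face S c & cw_between d1 c d2].
Proof.
move=> [rotM _ crossM _] fullM kiteM _ vS Hd1 Hd2 G1 G2 NF.
have d1d2 : fconnect (pnxt M) d1 d2 by case: rotM => _ _ _ _; apply; rewrite Hd1 Hd2.
set n := findex (pnxt M) d1 d2.
have n_gt0 : 0 < n.
  by rewrite lt0n findex_eq0; apply: contraNneq NF => ->; apply: connect0.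
apply: NNPP => no_transition.
have corners_ok k : k < n -> ~ transition_face S (iter k (pnxt M) d1).
  move=> ltkn Tk; apply: no_transition; exists (iter k (pnxt M) d1).
  split=> //; first by rewrite tail_iter_nxt.
  exists k; split=> // j /andP[_ ljk].
  exact: iter_lt_findex d1d2 (leq_ltn_trans ljk ltkn).
move/negP: NF; apply.
rewrite -(iter_findex d1d2).
apply: same_flap_around_vertex => //; first by rewrite Hd1.
by rewrite iter_findex.
Qed.
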